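(* Let $\Gamma$ and $G$ be groups and let $H\le\Gamma\wr G$ be a subgroup such that $\mathrm{pr}(H)=G$ and such that, for some $1\neq g\in G$, $H\cap\Gamma^G$ surjects onto $\Gamma^{\{1,g\}}$ under the restriction map $f\mapsto f|_{\{1,g\}}$. Then for every subgroup $N$ with $[H,H]\le N\le\Gamma\wr G$, the group $N\cap\Gamma^G$ surjects onto $\Gamma^{\{1\}}$ under the restriction map $f\mapsto f|_{\{1\}}$.
   Context: The wreath product is $\Gamma\wr G=\Gamma^G\rtimes G$, where $\Gamma^G$ is the group (pointwise multiplication) of all functions $f\colon G\to\Gamma$, and $G$ acts from the right by $f^h(g)=f(hg)$ for $f\in\Gamma^G$, $g,h\in G$. $\mathrm{pr}\colon\Gamma\wr G\to G$, $(f,g)\mapsto g$, is the canonical projection. For $T\subseteq G$, $\Gamma^T$ denotes the functions $T\to\Gamma$. $[H,H]$ is the commutator subgroup. *)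

From Stdlib Require Import FunctionalExtensionality.

Set Implicit Arguments.

Record Group := {
  carrier :> Type;
  gmul : carrier -> carrier -> carrier;
  gone : carrier;
  ginv : carrier -> carrier;
  gmulA : forall x y z, gmul x (gmul y z) = gmul (gmul x y) z;
  gmul1 : forall x, gmul gone x = x;
  gmulg1 : forall x, gmul x gone = x;
  gmulV : forall x, gmul (ginv x) x = gone;
  gmulgV : forall x, gmul x (ginv x) = gone
}.

Arguments gmul {g}.
Arguments gone {g}.
Arguments ginv {g}.

(* Elements of the wreath product Gamma wr G: a pair (f, g), read as the
   product f * g, with f in Gamma^G and g in G, where G acts on Gamma^G
   from the right by f^h (x) = f (h x), i.e. g^-1 f g = f^g. *)
Definition wr (Gam G : Group) : Type := ((G -> Gam) * G)%type.

(* (f1 g1)(f2 g2) = f1 (f2^(g1^-1)) g1 g2 *)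
Definition wr_mul (Gam G : Group) (a b : wr Gam G) : wr Gam G :=
  (fun x => gmul (fst a x) (fst b (gmul (ginv (snd a)) x)),
   gmul (snd a) (snd b)).

Definition wr_one (Gam G : Group) : wr Gam G := (fun _ => gone, gone).

(* inverse of f g is g^-1 f^-1 = (f^-1)^(g) g^-1 *)
Definition wr_inv (Gam G : Group) (a : wr Gam G) : wr Gam G :=
  (fun x => ginv (fst a (gmul (snd a) x)), ginv (snd a)).

Definition pr (Gam G : Group) (a : wr Gam G) : G := snd a.

Definition wr_comm (Gam G : Group) (a b : wr Gam G) : wr Gam G :=
  wr_mul (wr_mul (wr_inv a) (wr_inv b)) (wr_mul a b).

Definition is_subgroup (Gam G : Group) (H : wr Gam G -> Prop) : Prop :=
  H (wr_one Gam G) /\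
  (forall a b, H a -> H b -> H (wr_mul a b)) /\
  (forall a, H a -> H (wr_inv a)).

Inductive gen (Gam G : Group) (S : wr Gam G -> Prop) : wr Gam G -> Prop :=
  | gen_in : forall a, S a -> gen S a
  | gen_one : gen S (wr_one Gam G)
  | gen_mul : forall a b, gen S a -> gen S b -> gen S (wr_mul a b)
  | gen_inv : forall a, gen S a -> gen S (wr_inv a).

Definition commutator_subgroup (Gam G : Group) (H : wr Gam G -> Prop)
  : wr Gam G -> Prop :=
  gen (fun c => exists a b, H a /\ H b /\ c = wr_comm a b).

(* membership in H cap Gamma^G: the element f (i.e. (f, 1)) *)
Definition in_base (Gam G : Group) (H : wr Gam G -> Prop) (f : G -> Gam) : Prop :=
  H (f, gone).

(* Take b = (phi, g) in H over the given g and k in H cap Gamma^G with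
   k(1) = 1 and k(g) = phi(g) u phi(g)^-1.  The commutator [k, b] lies in
   [H, H] <= N, projects to 1 in G, and its value at 1 is
   k(1)^-1 phi(g)^-1 k(g) phi(g) = u. *)

Section GroupFacts.

Variable Gm : Group.

Definition gconj (x y : Gm) : Gm := gmul (ginv y) (gmul x y).

Lemma ginv_unique (x y : Gm) : gmul x y = gone -> ginv x = y.
Proof.
  intro Exy.
  rewrite <- (gmulg1 _ (ginv x)), <- Exy, gmulA, gmulV, gmul1.
  reflexivity.
Qed.

Lemma ginv1 : ginv (@gone Gm) = gone.
Proof. apply ginv_unique, gmul1. Qed.

Lemma ginvK (x : Gm) : ginv (ginv x) = x.
Proof. apply ginv_unique, gmulV. Qed.

Lemma gconjVK (x y : Gm) : gconj (gconj x (ginv y)) y = x.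
Proof.
  unfold gconj.
  rewrite ginvK, !gmulA, gmulV, gmul1, <- gmulA, gmulV, gmulg1.
  reflexivity.
Qed.

End GroupFacts.

Arguments gconj {Gm}.

Section WreathCommutator.

Variables Gam G : Group.

Lemma pr_wr_comm_base (k : G -> Gam) (b : wr Gam G) :
  pr (wr_comm (k, gone) b) = gone.
Proof.
  unfold pr, wr_comm, wr_mul, wr_inv; simpl.
  rewrite ginv1, !gmul1, gmulV.
  reflexivity.
Qed.

Lemma wr_comm_base_fst (k phi : G -> Gam) (g x : G) :
  fst (wr_comm (k, gone) (phi, g)) x =
  gmul (ginv (k x)) (gconj (k (gmul g x)) (phi (gmul g x))).
Proof.
  unfold gconj, wr_comm, wr_mul, wr_inv; simpl.
  rewrite !ginv1, !gmul1, ginvK, <- !gmulA.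
  reflexivity.
Qed.

Lemma in_base_of_pr1 (N : wr Gam G -> Prop) (a : wr Gam G) :
  N a -> pr a = gone -> in_base N (fst a).
Proof. destruct a as [f x]; unfold in_base, pr; simpl; intros Na ->; exact Na. Qed.

Lemma commutator_subgroup_comm (H : wr Gam G -> Prop) (a b : wr Gam G) :
  H a -> H b -> commutator_subgroup H (wr_comm a b).
Proof. intros Ha Hb; apply gen_in; exists a, b; auto. Qed.

End WreathCommutator.

Theorem lemma4p11 (Gam G : Group) (H : wr Gam G -> Prop) :
  is_subgroup H ->
  (* pr(H) = G *)
  (forall g : G, exists a, H a /\ pr a = g) ->
  (* for some g <> 1, H cap Gamma^G surjects onto Gamma^{1,g} *)
  (exists g : G, g <> gone /\
     forall u v : Gam, exists f : G -> Gam,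
       in_base H f /\ f gone = u /\ f g = v) ->
  forall N : wr Gam G -> Prop,
    is_subgroup N ->
    (forall a, commutator_subgroup H a -> N a) ->
    (* N cap Gamma^G surjects onto Gamma^{1} *)
    forall u : Gam, exists f : G -> Gam, in_base N f /\ f gone = u.
Proof.
  (* g <> 1 is implied by the surjectivity onto Gamma^{1,g} unless Gamma is
     trivial, and a single commutator suffices, so no closure property of H
     or N is needed. *)
  intros _ pr_onto [g [_ base_onto]] N _ commHN u.
  destruct (pr_onto g) as [[phi g'] [Hb pr_b]].
  unfold pr in pr_b; simpl in pr_b; subst g'.
  destruct (base_onto gone (gconj u (ginv (phi g)))) as [k [Hk [k1 kg]]].
  exists (fst (wr_comm (k, gone) (phi, g))); split.
  - apply in_base_of_pr1.
    + apply commHN, commutator_subgroup_comm; assumption.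
    + apply pr_wr_comm_base.
  - rewrite wr_comm_base_fst, gmulg1, k1, kg, ginv1, gmul1.
    apply gconjVK.
Qed.
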